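(* Let $i,j\in G$, let $\rho$ be a state on $L_2(G)$ with $\operatorname{Tr}K_{|\overline{b_i}\rangle\langle\overline{b_i}|}(\rho)>0$, and let $\gamma$ be a state on $L_2(G)$ such that $\operatorname{Tr}K_\gamma\big(U_jK_{|\overline{b_i}\rangle\langle\overline{b_i}|}(\rho)U_j^*\big)>0$. Then $\operatorname{Tr}_{1,2,3}(F_{i,j}\otimes I)(\rho\otimes\mathbf e(\gamma))(F_{i,j}\otimes I)>0$ and $$\Lambda_{i,j}(\rho\otimes\gamma)=\hat K_\gamma\circ K^j\circ\hat K_{|\overline{b_i}\rangle\langle\overline{b_i}|}(\rho),$$ where $K^j(\sigma)=U_j\sigma U_j^*$. Equivalently, $\Lambda_{i,j}(\rho\otimes\gamma)$ is the normalization to trace one of $K_\gamma(U_jB_i^*\rho B_iU_j^* )$.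
   Context: Fix an integer $n\ge 1$ and $G=\{1,\dots,n\}$. $L_2(G)$ is the space of functions $f:G\to\mathbb C$ with inner product $\langle f,g\rangle=\sum_{k\in G}\overline{f(k)}g(k)$; $L_2(G^2)$, $L_2(G^3)$ are the analogous spaces on $G^2,G^3$, identified with tensor products via $(f\otimes g)(k,l)=f(k)g(l)$; the three factors of $L_2(G^3)=\mathcal H_1\otimes\mathcal H_2\otimes\mathcal H_3$ are numbered 1,2,3. For a vector $f$, $|f\rangle\langle f|$ is the operator $\phi\mapsto\langle f,\phi\rangle f$. $I$ is the identity. A state is a positive operator of trace 1. For $k,l\in G$, $k\oplus l$ is the unique element of $G$ congruent to $k+l$ modulo $n$. $\mathcal O_g$ is the multiplication operator $(\mathcal O_gf)(k)=g(k)f(k)$. $J:L_2(G)\to L_2(G^2)$ is $(Jf)(k,l)=f(k)\delta_{k,l}$. $U_k$ is the unitary $(U_kf)(m)=f(k\oplus m)$. $(b_k)_{k\in G}$ is a fixed orthonormal basis of $L_2(G)$, $B_k=\mathcal O_{b_k}$, $\overline{b_i}$ the complex conjugate function. $\xi_{k,l}(m,r)=b_k(m)\delta_{m,r\oplus l}$ and $F_{i,j}=|\xi_{i,j}\rangle\langle\xi_{i,j}|$ (an operator on $\mathcal H_1\otimes\mathcal H_2$). For a state $\gamma$, $\mathbf e(\gamma):=J\gamma J^*$ (a state on $\mathcal H_2\otimes\mathcal H_3$). For states $\rho,\gamma$ with positive denominator, $$\Lambda_{i,j}(\rho\otimes\gamma):=\frac{\operatorname{Tr}_{1,2}(F_{i,j}\otimes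 I)(\rho\otimes\mathbf e(\gamma))(F_{i,j}\otimes I)}{\operatorname{Tr}_{1,2,3}(F_{i,j}\otimes I)(\rho\otimes\mathbf e(\gamma))(F_{i,j}\otimes I)},$$ with $\operatorname{Tr}_{1,2}$ the partial trace over $\mathcal H_1\otimes\mathcal H_2$ and $\operatorname{Tr}_{1,2,3}$ the full trace. For a positive operator $\tau=\sum_k\gamma_k|h_k\rangle\langle h_k|$ ($\gamma_k\ge0$, $(h_k)$ orthonormal basis), $K_\tau(\rho):=\sum_k\gamma_k\mathcal O_{h_k}\rho\mathcal O_{h_k}^*$ for positive operators $\rho$ (independent of the representation of $\tau$); for $\rho$ with $\operatorname{Tr}K_\tau(\rho)>0$, $\hat K_\tau(\rho):=K_\tau(\rho)/\operatorname{Tr}K_\tau(\rho)$. In particular $K_{|\overline{b_i}\rangle\langle\overline{b_i}|}(\rho)=B_i^*\rho B_i$. *)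

From HB Require Import structures.
From mathcomp Require Import all_boot all_order all_algebra.

Set Implicit Arguments.
Unset Strict Implicit.
Unset Printing Implicit Defensive.

Import Order.TTheory GRing.Theory Num.Theory.
Local Open Scope ring_scope.

(* Operators between finite-dimensional L_2 spaces L_2(Y) -> L_2(X) are
   represented by their kernels A : X -> Y -> C, acting by
   (A f)(x) = \sum_y A x y * f y. *)
Section Ops.
Variable C : numClosedFieldType.

Definition l2dot (X : finType) (f g : X -> C) : C := \sum_x (f x)^* * g x.
Definition opapp (X Y : finType) (A : X -> Y -> C) (f : Y -> C) : X -> C :=
  fun x => \sum_y A x y * f y.
Definition opcomp (X Y Z : finType) (A : X -> Y -> C) (B : Y -> Z -> C) : X -> Z -> C :=
  fun x z => \sum_y A x y * B y z.
Definition opadj (X Y : finType) (A : X -> Y -> C) : Y -> X -> C :=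
  fun y x => (A x y)^*.
Definition optr (X : finType) (A : X -> X -> C) : C := \sum_x A x x.
Definition idop (X : finType) : X -> X -> C := fun x y => (x == y)%:R.
Definition scaleop (X Y : finType) (a : C) (A : X -> Y -> C) : X -> Y -> C :=
  fun x y => a * A x y.
Definition pos_op (X : finType) (A : X -> X -> C) : Prop :=
  forall f : X -> C, 0 <= l2dot f (opapp A f).
Definition is_state (X : finType) (A : X -> X -> C) : Prop :=
  pos_op A /\ optr A = 1.
Definition ketbra (X : finType) (f : X -> C) : X -> X -> C :=
  fun x y => f x * (f y)^*.
Definition mulop (X : finType) (g : X -> C) : X -> X -> C :=
  fun x y => if x == y then g x else 0.
Definition optensor (X Y : finType) (A : X -> X -> C) (B : Y -> Y -> C)
  : X * Y -> X * Y -> C := fun p q => A p.1 q.1 * B p.2 q.2.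
Definition normalize_tr (X : finType) (A : X -> X -> C) : X -> X -> C :=
  scaleop (optr A)^-1 A.
Definition ortho_basis (X I : finType) (h : I -> X -> C) : Prop :=
  forall k l, l2dot (h k) (h l) = (k == l)%:R.
End Ops.

(* The set G = {1,...,n} is represented by 'I_n, the ordinal k : 'I_n standing
   for the element k+1 of G. *)
Section G.
Variable C : numClosedFieldType.
Variable n : nat.

Lemma ord_pos (k : 'I_n) : (0 < n)%N.
Proof. exact: leq_ltn_trans (leq0n k) (ltn_ord k). Qed.

(* k (+) l : the element of G congruent to k+l mod n.  In 0-based codes:
   code(k (+) l) = ((code k + 1) + (code l + 1) - 1) mod n. *)
Definition oplus (k l : 'I_n) : 'I_n :=
  Ordinal (ltn_pmod (k + l + 1) (ord_pos k)).

Definition Jop : 'I_n * 'I_n -> 'I_n -> C :=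
  fun p m => ((p.1 == p.2) && (p.1 == m))%:R.

Definition Ush (k : 'I_n) : 'I_n -> 'I_n -> C :=
  fun m m' => (m' == oplus k m)%:R.

Definition xi (b : 'I_n -> 'I_n -> C) (k l : 'I_n) : 'I_n * 'I_n -> C :=
  fun p => b k p.1 * (p.1 == oplus p.2 l)%:R.

Definition Fop (b : 'I_n -> 'I_n -> C) (i j : 'I_n) := ketbra (xi b i j).

Definition estate (gamma : 'I_n -> 'I_n -> C) : 'I_n * 'I_n -> 'I_n * 'I_n -> C :=
  opcomp (opcomp Jop gamma) (opadj Jop).

(* L_2(G^3) = H_1 (x) H_2 (x) H_3, indexed by ((k1,k2),k3).
   rho (x) sigma with rho on H_1 and sigma on H_2 (x) H_3. *)
Definition tensor1_23 (rho : 'I_n -> 'I_n -> C)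
  (sigma : 'I_n * 'I_n -> 'I_n * 'I_n -> C)
  : ('I_n * 'I_n) * 'I_n -> ('I_n * 'I_n) * 'I_n -> C :=
  fun x y => rho x.1.1 y.1.1 * sigma (x.1.2, x.2) (y.1.2, y.2).

Definition ptr12 (M : ('I_n * 'I_n) * 'I_n -> ('I_n * 'I_n) * 'I_n -> C)
  : 'I_n -> 'I_n -> C :=
  fun x y => \sum_a \sum_b M ((a, b), x) ((a, b), y).

Definition LambdaNum (b : 'I_n -> 'I_n -> C) (i j : 'I_n)
  (rho gamma : 'I_n -> 'I_n -> C) :=
  let FI := optensor (Fop b i j) (@idop C _) in
  opcomp (opcomp FI (tensor1_23 rho (estate gamma))) FI.

Definition Lambda (b : 'I_n -> 'I_n -> C) (i j : 'I_n)
  (rho gamma : 'I_n -> 'I_n -> C) : 'I_n -> 'I_n -> C :=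
  scaleop (optr (LambdaNum b i j rho gamma))^-1
          (ptr12 (LambdaNum b i j rho gamma)).

(* K_tau(rho) = \sum_k c_k O_{h_k} rho O_{h_k}^*, computed from a
   representation tau = \sum_k c_k |h_k><h_k| *)
Definition Kdec (c : 'I_n -> C) (h : 'I_n -> 'I_n -> C)
  (rho : 'I_n -> 'I_n -> C) : 'I_n -> 'I_n -> C :=
  fun x y => \sum_k c k * opcomp (opcomp (mulop (h k)) rho) (opadj (mulop (h k))) x y.

Definition is_decomp (tau : 'I_n -> 'I_n -> C) (c : 'I_n -> C)
  (h : 'I_n -> 'I_n -> C) : Prop :=
  [/\ forall k, 0 <= c k, ortho_basis h &
      tau = fun x y => \sum_k c k * ketbra (h k) x y].

Definition Kshift (j : 'I_n) (sigma : 'I_n -> 'I_n -> C) : 'I_n -> 'I_n -> C :=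
  opcomp (opcomp (Ush j) sigma) (opadj (Ush j)).

(* K_{|conj b_i><conj b_i|}(rho) = B_i^* rho B_i *)
Definition Kbbar (b : 'I_n -> 'I_n -> C) (i : 'I_n) (rho : 'I_n -> 'I_n -> C)
  : 'I_n -> 'I_n -> C :=
  opcomp (opcomp (opadj (mulop (b i))) rho) (mulop (b i)).
End G.

From HB Require Import structures.
From mathcomp Require Import all_boot all_order all_algebra ring.
From Stdlib Require Import FunctionalExtensionality.
Import Order.TTheory GRing.Theory Num.Theory.
Local Open Scope ring_scope.

Set Implicit Arguments.
Unset Strict Implicit.
Unset Printing Implicit Defensive.

(* K_tau acts on kernels as the entrywise (Schur) product with the kernel of
   tau.  Since xi_{i,j} is supported on the graph of r |-> r (+) j, compressing
   rho (x) J gamma J^* by F_{i,j} (x) I yields the product operator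
   F_{i,j} (x) (gamma o U_j B_i^* rho B_i U_j^* ), with o the Schur product.
   As xi_{i,j} is a unit vector, F_{i,j} has trace one, so the full and the
   partial trace both reduce to the second factor; finally the normalisation
   of B_i^* rho B_i is a scalar, which commutes with U_j . U_j^* and gamma o . *)

Section Kernels.
Variable C : numClosedFieldType.
Implicit Types X Y : finType.

Definition hadamard X (A B : X -> X -> C) : X -> X -> C := fun x y => A x y * B x y.

Lemma pair_sum X Y (F : X * Y -> C) : \sum_p F p = \sum_x \sum_y F (x, y).
Proof. by rewrite pair_bigA; apply: eq_bigr => -[]. Qed.

Lemma opcomp_mulopl X (g : X -> C) (A : X -> X -> C) x y :
  opcomp (mulop g) A x y = g x * A x y.
Proof.
rewrite /opcomp (big_only1 x) // /mulop ?eqxx // => z.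
by rewrite eq_sym => /negbTE-> _; rewrite mul0r.
Qed.

Lemma opcomp_mulopr X (A : X -> X -> C) (g : X -> C) x y :
  opcomp A (mulop g) x y = A x y * g y.
Proof.
rewrite /opcomp (big_only1 y) // /mulop ?eqxx // => z /negbTE-> _.
by rewrite mulr0.
Qed.

Lemma opadj_mulop X (g : X -> C) : opadj (mulop g) = mulop (fun x => (g x)^*).
Proof.
do 2 apply: functional_extensionality => ?; rewrite /opadj /mulop eq_sym.
by case: eqVneq => [->|]; rewrite ?conjC0.
Qed.

Lemma optr_optensor X Y (A : X -> X -> C) (B : Y -> Y -> C) :
  optr (optensor A B) = optr A * optr B.
Proof.
by rewrite /optr pair_sum big_distrl; apply: eq_bigr => x _; rewrite big_distrr.
Qed.

Lemma optr_ketbra X (f : X -> C) : optr (ketbra f) = l2dot f f.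
Proof. by apply: eq_bigr => x _; rewrite /ketbra mulrC. Qed.

Lemma sandwich_ketbra_tensor_idop X Y (f : X -> C) (M : X * Y -> X * Y -> C) :
  opcomp (opcomp (optensor (ketbra f) (@idop C Y)) M)
         (optensor (ketbra f) (@idop C Y)) =
    optensor (ketbra f) (fun x y => \sum_P \sum_Q (f P)^* * M (P, x) (Q, y) * f Q).
Proof.
apply: functional_extensionality => -[P x]; apply: functional_extensionality => -[Q y].
rewrite /opcomp /optensor /ketbra /idop /= pair_sum [in RHS]exchange_big big_distrr /=.
apply: eq_bigr => Q' _.
rewrite (big_only1 y) // => [|z /negbTE-> _]; last by rewrite mulr0n !mulr0.
rewrite eqxx pair_sum big_distrl big_distrr /=; apply: eq_bigr => P' _.
rewrite (big_only1 x) // => [|z]; first by rewrite eqxx mulr1n; ring.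
by rewrite eq_sym => /negbTE-> _; rewrite mulr0n !mulr0 !mul0r.
Qed.

Lemma scaleop1 X (A : X -> X -> C) : scaleop 1 A = A.
Proof. by do 2 apply: functional_extensionality => ?; rewrite /scaleop mul1r. Qed.

Lemma hadamard_scaler X (a : C) (A B : X -> X -> C) :
  hadamard A (scaleop a B) = scaleop a (hadamard A B).
Proof.
by do 2 apply: functional_extensionality => ?; rewrite /hadamard /scaleop mulrCA.
Qed.

Lemma normalize_tr_scale X (a : C) (A : X -> X -> C) :
  a != 0 -> normalize_tr (scaleop a A) = normalize_tr A.
Proof.
move=> a0; rewrite /normalize_tr /optr /scaleop -big_distrr /=.
do 2 apply: functional_extensionality => ?.
by rewrite invfM mulrACA mulVf // mul1r.
Qed.

End Kernels.

Section G.
Variable C : numClosedFieldType.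
Variable n : nat.
Implicit Types (rho gamma sigma : 'I_n -> 'I_n -> C) (b : 'I_n -> 'I_n -> C).

Lemma oplusC (k l : 'I_n) : oplus k l = oplus l k.
Proof. by apply: val_inj; rewrite /= (addnC k). Qed.

Lemma oplusl_inj (j : 'I_n) : injective (fun k => oplus k j).
Proof.
move=> k l /(congr1 val) /= /eqP.
rewrite -!addnA !(addnC _ (j + 1)%N) eqn_modDl !modn_small //.
by move/eqP/val_inj.
Qed.

Lemma Kdec_hadamard tau c h sigma :
  is_decomp tau c h -> Kdec c h sigma = hadamard tau sigma.
Proof.
case=> _ _ ->.
apply: functional_extensionality => x; apply: functional_extensionality => y.
rewrite /Kdec /hadamard big_distrl /=; apply: eq_bigr => k _.
by rewrite opadj_mulop opcomp_mulopr opcomp_mulopl /ketbra; ring.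
Qed.

Lemma KbbarE b i rho x y : Kbbar b i rho x y = (b i x)^* * rho x y * b i y.
Proof. by rewrite /Kbbar opcomp_mulopr opadj_mulop opcomp_mulopl. Qed.

Lemma KshiftE j sigma x y : Kshift j sigma x y = sigma (oplus j x) (oplus j y).
Proof.
rewrite /Kshift /opcomp /opadj /Ush (big_only1 (oplus j y)) => [|//|z /negbTE-> _].
  rewrite (big_only1 (oplus j x)) => [|//|z]; first by rewrite !eqxx conjC1 mulr1 mul1r.
  by rewrite eq_sym => /negbTE-> _; rewrite mul0r.
by rewrite conjC0 mulr0.
Qed.

Lemma Kshift_scale j (a : C) sigma :
  Kshift j (scaleop a sigma) = scaleop a (Kshift j sigma).
Proof. by do 2 apply: functional_extensionality => ?; rewrite /scaleop !KshiftE. Qed.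

Lemma estateE gamma p1 p2 q1 q2 :
  estate gamma (p1, p2) (q1, q2) = (p1 == p2)%:R * (q1 == q2)%:R * gamma p1 q1.
Proof.
rewrite /estate /opcomp /opadj /Jop /= (big_only1 q1) => [|//|z].
  rewrite (big_only1 p1) => [|//|z]; first by rewrite !eqxx !andbT conjC_nat mulrAC.
  by rewrite eq_sym => /negbTE-> _; rewrite andbF mul0r.
by rewrite eq_sym => /negbTE-> _; rewrite andbF conjC0 mulr0.
Qed.

Lemma l2dot_xi b i j : ortho_basis b -> l2dot (xi b i j) (xi b i j) = 1.
Proof.
move=> hb; transitivity (l2dot (b i) (b i)); last by rewrite hb eqxx.
rewrite /l2dot pair_sum exchange_big [RHS](reindex_inj (oplusl_inj (j:=j))) /=.
apply: eq_bigr => r _; rewrite (big_only1 (oplus r j)) => [|//|a /negbTE a_r _].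
  by rewrite /xi /= eqxx mulr1.
by rewrite /xi /= a_r mulr0 conjC0 mul0r.
Qed.

Lemma xi_compression b i j rho gamma x y :
  \sum_P \sum_Q
     (xi b i j P)^* * tensor1_23 rho (estate gamma) (P, x) (Q, y) * xi b i j Q =
  gamma x y * Kbbar b i rho (oplus x j) (oplus y j).
Proof.
rewrite KbbarE pair_sum exchange_big (big_only1 x) => [|//|r /negbTE r_x _]; last first.
  rewrite big1 // => a _; rewrite big1 // => Q _.
  by rewrite /tensor1_23 estateE /= r_x !(mul0r, mulr0).
rewrite (big_only1 (oplus x j)) => [|//|a /negbTE a_x _]; last first.
  by rewrite big1 // => Q _; rewrite /xi /= a_x !(mul0r, mulr0, conjC0).
rewrite pair_sum exchange_big (big_only1 y) => [|//|r /negbTE r_y _]; last first.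
  by rewrite big1 // => a _; rewrite /tensor1_23 estateE /= r_y !(mul0r, mulr0).
rewrite (big_only1 (oplus y j)) => [|//|a /negbTE a_y _]; last first.
  by rewrite /xi /= a_y !(mul0r, mulr0).
by rewrite /xi /tensor1_23 estateE /= !eqxx !mulr1 mulr1n; ring.
Qed.

Lemma ptr12_optensor (A : 'I_n * 'I_n -> 'I_n * 'I_n -> C) sigma :
  ptr12 (optensor A sigma) = scaleop (optr A) sigma.
Proof.
do 2 apply: functional_extensionality => ?.
rewrite /ptr12 /optr /scaleop pair_sum big_distrl.
by apply: eq_bigr => a _; rewrite big_distrl.
Qed.

Lemma optr_Fop b i j : ortho_basis b -> optr (Fop b i j) = 1.
Proof. by move=> hb; rewrite /Fop optr_ketbra l2dot_xi. Qed.

Lemma LambdaNumE b i j rho gamma :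
  LambdaNum b i j rho gamma =
    optensor (Fop b i j) (hadamard gamma (Kshift j (Kbbar b i rho))).
Proof.
rewrite /LambdaNum /Fop sandwich_ketbra_tensor_idop; congr optensor.
do 2 apply: functional_extensionality => ?.
by rewrite xi_compression /hadamard KshiftE !(oplusC j).
Qed.

End G.

Theorem proposition3 (C : numClosedFieldType) (n : nat) (hn : (0 < n)%N)
  (b : 'I_n -> 'I_n -> C) (hb : ortho_basis b)
  (i j : 'I_n) (rho gamma : 'I_n -> 'I_n -> C)
  (c : 'I_n -> C) (h : 'I_n -> 'I_n -> C) :
  is_state rho ->
  0 < optr (Kbbar b i rho) ->
  is_state gamma ->
  is_decomp gamma c h ->
  0 < optr (Kdec c h (Kshift j (Kbbar b i rho))) ->
  0 < optr (LambdaNum b i j rho gamma) /\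
  Lambda b i j rho gamma =
    normalize_tr (Kdec c h (Kshift j (normalize_tr (Kbbar b i rho)))).
Proof.
move=> _ tr_pos _ dec_gamma; rewrite !(Kdec_hadamard _ dec_gamma).
set N := hadamard gamma (Kshift j (Kbbar b i rho)).
have tr_Lambda : optr (LambdaNum b i j rho gamma) = optr N.
  by rewrite LambdaNumE optr_optensor optr_Fop // mul1r.
rewrite tr_Lambda; split=> //.
rewrite /Lambda tr_Lambda LambdaNumE ptr12_optensor optr_Fop // scaleop1 -/N.
rewrite {2}/normalize_tr Kshift_scale hadamard_scaler -/N.
by rewrite normalize_tr_scale // invr_neq0 // gt_eqF.
Qed.
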